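(* Under the setting above, \begin{equation*} \sum_{k = 0}^{1 - a_{\eta\eta'}}(-1)^k\begin{bmatrix} 1 - a_{\eta\eta'} \\ k \end{bmatrix}_{d_{\eta}} \widetilde f_{\eta}^k\widetilde f_{\eta'} \widetilde f_{\eta}^{1-a_{\eta\eta'} - k} = 0 \end{equation*} in $\mathbf{U}_q^-$.
   Context: Let $X = (I, (\ ,\ ))$ be a Cartan datum with Cartan matrix $a_{ij} = 2(\alpha_i,\alpha_j)/(\alpha_i,\alpha_i)$, $d_i = (\alpha_i,\alpha_i)/2$, and let $\mathbf{U}_q^-$ be the $\mathbb{Q}(q)$-algebra generated by $f_i$ ($i \in I$) subject to the quantum Serre relations $\sum_{k=0}^{1-a_{ij}}(-1)^k\begin{bmatrix} 1 - a_{ij} \\ k\end{bmatrix}_{d_i} f_i^k f_j f_i^{1-a_{ij}-k} = 0$ ($i \ne j$), where $[n] = \frac{q^n - q^{-n}}{q - q^{-1}}$, $\begin{bmatrix} n \\ m\end{bmatrix} = \frac{[n]\cdots[n-m+1]}{[m]^!}$ and the subscript $d$ means $q$ is replaced by $q^d$. Let $\sigma$ be an admissible diagram automorphism of $X$ (a permutation of $I$ preserving $(\ ,\ )$ with $(\alpha_i,\alpha_j)=0$ for distinct $i,j$ in the same orbit), $\underline{I}$ the set of $\sigma$-orbits, and $\underline X$ the induced Cartan datum with $(\alpha_\eta,\alpha_\eta)_1 = (\alpha_i,\alpha_i)|\eta|$ ($i \in \eta$), $(\alpha_\eta,\alpha_{\eta'})_1 = \sum_{i\in\eta, j\in\eta'}(\alpha_i,\alpha_j)$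 for $\eta\ne\eta'$, $d_\eta = (\alpha_\eta,\alpha_\eta)_1/2$, $a_{\eta\eta'} = 2(\alpha_\eta,\alpha_{\eta'})_1/(\alpha_\eta,\alpha_\eta)_1$. Fix $\eta \ne \eta' \in \underline{I}$ with $\eta = \{i\}$ a single element and $|\eta'| = n-1$, such that every $j \in \eta'$ is joined to $i$ (i.e. $a_{ij} \ne 0$), with $a_{ij}$ independent of $j \in \eta'$; set $r = 1 - a_{ij}$, so $1 - a_{\eta\eta'} = (n-1)(r-1)+1$ and $d_\eta = d_i$. Put $\widetilde f_\eta = f_i$ and $\widetilde f_{\eta'} = \prod_{j \in \eta'} f_j$. *)

From HB Require Import structures.
From mathcomp Require Import all_boot all_order.
From mathcomp Require Import fingroup perm.
From mathcomp Require Import all_algebra.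
Set Implicit Arguments. Unset Strict Implicit. Unset Printing Implicit Defensive.
Import Order.TTheory GRing.Theory Num.Theory.
Local Open Scope ring_scope.

Definition Qq : fieldType := {fraction {poly rat}}.
Definition qq : Qq := tofrac ('X : {poly rat}).

Definition qint (d n : nat) : Qq :=
  (qq ^+ (d * n) - qq ^- (d * n)) / (qq ^+ d - qq ^- d).
Definition qfact (d m : nat) : Qq := \prod_(1 <= l < m.+1) qint d l.
Definition qbinom (d n m : nat) : Qq :=
  (\prod_(0 <= l < m) qint d (n - l)) / qfact d m.

Definition cartan_datum (I : finType) (B : I -> I -> int) : Prop :=
  [/\ forall i j, B i j = B j i,
      forall i, (0 < B i i)%R /\ (2 %| B i i)%Z &
      forall i j, i != j -> (B i i %| 2 * B i j)%Z /\ (B i j <= 0)%R].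

Definition cartan_a (I : finType) (B : I -> I -> int) (i j : I) : int :=
  ((2 * B i j) %/ B i i)%Z.
Definition dsym (I : finType) (B : I -> I -> int) (i : I) : nat :=
  `|((B i i) %/ 2)%Z|%N.

Definition serre_rels (I : finType) (B : I -> I -> int) (A : algType Qq)
  (f : I -> A) : Prop :=
  forall i j, i != j ->
    let N := `|1 - cartan_a B i j|%N in
    \sum_(0 <= k < N.+1)
      ((-1) ^+ k * qbinom (dsym B i) N k) *: (f i ^+ k * f j * f i ^+ (N - k)) = 0.

Definition admissible (I : finType) (B : I -> I -> int) (s : {perm I}) : Prop :=
  (forall i j, B (s i) (s j) = B i j) /\
  (forall i j, i != j -> j \in porbit s i -> B i j = 0).

Definition orbit_form_diag (I : finType) (B : I -> I -> int) (i : I) (eta : {set I}) : int :=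
  B i i * (#|eta|%:Z).
Definition orbit_form (I : finType) (B : I -> I -> int) (eta eta' : {set I}) : int :=
  \sum_(i in eta) \sum_(j in eta') B i j.
Definition orbit_cartan_a (I : finType) (B : I -> I -> int) (i : I) (eta eta' : {set I}) : int :=
  ((2 * orbit_form B eta eta') %/ orbit_form_diag B i eta)%Z.
Definition orbit_d (I : finType) (B : I -> I -> int) (i : I) (eta : {set I}) : nat :=
  `|(orbit_form_diag B i eta %/ 2)%Z|%N.

From HB Require Import structures.
From mathcomp Require Import all_boot all_order.
From mathcomp Require Import fingroup perm.
From mathcomp Require Import all_algebra ring zify.
Set Implicit Arguments. Unset Strict Implicit. Unset Printing Implicit Defensive.
Import GRing.Theory Num.Theory.
Local Open Scope ring_scope.

(** Put [F = f_i], [w = q^(d_i)] and let [qad c z = F z - c z F] be the twisted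
    adjoint action.  By q-Pascal, the Serre element of degree [M+1] in [F] and [z]
    is, up to sign, the iterate [qad (w^-M) (... (qad (w^(M-2)) (qad (w^M) z)))].
    The twisted Leibniz rule [qad (α β) (x y) = qad α x * y + α x * qad β y] shows
    that [r + m + 1] iterations on [x y] give a combination of products of [s]
    iterations on [x] and [t] on [y] with [s + t = r + m + 1], hence vanish once
    [r + 1] iterations kill [x] and [m + 1] kill [y].  Each [f_j], [j ∈ η'], is
    killed by [1 - a_ij] iterations (its Serre relation), so their product is
    killed by [(n - 1)(-a_ij) + 1 = 1 - a_ηη'] iterations, which is the claim. *)

Lemma qq_neq0 : qq != 0.
Proof. by rewrite tofrac_eq0 polyX_eq0. Qed.

Lemma qqX_neq1 m : (0 < m)%N -> qq ^+ m != 1.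
Proof.
move=> m_gt0; rewrite /qq -tofracXn -tofrac1 tofrac_eq.
apply/eqP => /(congr1 (size : {poly rat} -> nat)).
by rewrite size_polyXn size_poly1; case: m m_gt0.
Qed.

Lemma qqX_subV_neq0 m : (0 < m)%N -> qq ^+ m - qq ^- m != 0.
Proof.
move=> m_gt0; rewrite subr_eq0.
have mm_gt0 : (0 < m + m)%N by rewrite addn_gt0 m_gt0.
apply: contraNneq (qqX_neq1 mm_gt0) => qm.
by rewrite exprD {1}qm mulVf // expf_neq0 // qq_neq0.
Qed.

Lemma qint0 d : qint d 0 = 0.
Proof. by rewrite /qint muln0 expr0 invr1 subrr mul0r. Qed.

Lemma qintD d m n :
  qint d (m + n) = (qq ^+ d) ^+ n * qint d m + (qq ^+ d) ^- m * qint d n.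
Proof.
rewrite /qint -!exprM !mulrA -mulrDl mulnDr exprD invfM; congr (_ / _).
by rewrite mulrC; ring.
Qed.

Lemma qint_neq0 d n : (0 < d)%N -> (0 < n)%N -> qint d n != 0.
Proof.
move=> d_gt0 n_gt0; rewrite mulf_neq0 ?invr_eq0 ?qqX_subV_neq0 //.
by rewrite muln_gt0 d_gt0.
Qed.

Lemma qbinom0 d M : qbinom d M 0 = 1.
Proof. by rewrite /qbinom /qfact !big_geq // divr1. Qed.

Lemma qbinom_succ d M : qbinom d M M.+1 = 0.
Proof. by rewrite /qbinom big_nat_recr //= subnn qint0 mulr0 mul0r. Qed.

Lemma qbinom_pascal d : (0 < d)%N -> forall M k, (k <= M)%N ->
  qbinom d M.+1 k.+1 =
    (qq ^+ d) ^+ (M - k) * qbinom d M k + (qq ^+ d) ^- k.+1 * qbinom d M k.+1.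
Proof.
move=> d_gt0 M k leqkM; have qk_neq0 : qint d k.+1 != 0 by exact: qint_neq0.
have qintM1 : qint d M.+1 =
    (qq ^+ d) ^+ (M - k) * qint d k.+1 + (qq ^+ d) ^- k.+1 * qint d (M - k).
  by rewrite -qintD; congr qint; lia.
rewrite /qbinom big_nat_recl // big_nat_recr //= subn0 /qfact big_nat_recr //=.
under eq_bigr => l _ do rewrite subSS.
set P := \prod_(0 <= l < k) _.
by rewrite -/(qfact d k) qintM1 -[_ * (P / _)](mulfK qk_neq0) !invfM; ring.
Qed.

Section TwistedAdjoint.

Variables (K : fieldType) (A : algType K) (F : A).

Definition qad (c : K) (z : A) : A := F * z - c *: (z * F).

Fixpoint qad_iter (al v : K) (n : nat) (z : A) : A :=
  if n is n'.+1 then qad (al * v ^+ n') (qad_iter al v n' z) else z.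

Lemma qad0 c : qad c 0 = 0.
Proof. by rewrite /qad mulr0 mul0r scaler0 subrr. Qed.

Lemma qadD c x y : qad c (x + y) = qad c x + qad c y.
Proof. by rewrite /qad mulrDr mulrDl scalerDr opprD addrACA. Qed.

Lemma qadZ c e x : qad c (e *: x) = e *: qad c x.
Proof. by rewrite /qad scalerBr -scalerAr -scalerAl !scalerA mulrC. Qed.

Lemma qad_mul al be x y : qad (al * be) (x * y) = qad al x * y + al *: (x * qad be y).
Proof.
rewrite /qad mulrBl mulrBr scalerBr -!scalerAl -!scalerAr !scalerA !mulrA.
by rewrite addrA subrK.
Qed.

Lemma qad_iter_eq0_le al v n m z :
  (n <= m)%N -> qad_iter al v n z = 0 -> qad_iter al v m z = 0.
Proof.
elim: m => [|m IHm]; first by rewrite leqn0 => /eqP->.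
rewrite leq_eqVlt ltnS => /predU1P[-> //| /IHm /[apply] /= ->].
exact: qad0.
Qed.

Section Products.

Variables (al be v : K) (a b : A).

Inductive qad_iter_mul_span (k : nat) : A -> Prop :=
| QadSpan0 : qad_iter_mul_span k 0
| QadSpanTerm s t c : (s + t)%N = k ->
    qad_iter_mul_span k (c *: (qad_iter al v s a * qad_iter be v t b))
| QadSpanD x y : qad_iter_mul_span k x -> qad_iter_mul_span k y ->
    qad_iter_mul_span k (x + y).

Lemma qad_iter_mul_span_qad k x : qad_iter_mul_span k x ->
  qad_iter_mul_span k.+1 (qad (al * be * v ^+ k) x).
Proof.
elim=> [|s t c <-|x1 x2 _ IH1 _ IH2]; first by rewrite qad0; exact: QadSpan0.
- have -> : al * be * v ^+ (s + t) = al * v ^+ s * (be * v ^+ t).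
    by rewrite exprD; ring.
  rewrite qadZ qad_mul scalerDr scalerA.
  apply: QadSpanD; first exact: (@QadSpanTerm _ s.+1 t).
  by apply: (@QadSpanTerm _ s t.+1); rewrite addnS.
- by rewrite qadD; exact: QadSpanD.
Qed.

Lemma qad_iter_mul_in_span k : qad_iter_mul_span k (qad_iter (al * be) v k (a * b)).
Proof.
elim: k => [|k IHk] /=; last exact: qad_iter_mul_span_qad.
by rewrite -[a * b]scale1r; exact: (@QadSpanTerm 0 0 0).
Qed.

Lemma qad_iter_mul_eq0 r m :
  qad_iter al v r.+1 a = 0 -> qad_iter be v m.+1 b = 0 ->
  qad_iter (al * be) v (r + m).+1 (a * b) = 0.
Proof.
move=> a0 b0; elim: (qad_iter_mul_in_span (r + m).+1) => [//|s t c st|x y _ -> _ ->].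
- have [lt_rs|le_sr] := ltnP r s.
    by rewrite (qad_iter_eq0_le lt_rs a0) mul0r scaler0.
  have le_mt : (m < t)%N by lia.
  by rewrite (qad_iter_eq0_le le_mt b0) mulr0 scaler0.
- by rewrite addr0.
Qed.

End Products.

Lemma qad_iter_prod_eq0 (J : eqType) (g : J -> A) (al v : K) m (l : seq J) :
  (forall j, j \in l -> qad_iter al v m.+1 (g j) = 0) ->
  qad_iter (al ^+ size l) v (m * size l).+1 (\prod_(j <- l) g j) = 0.
Proof.
elim: l => [|j l IHl] gl0.
  by rewrite big_nil muln0 /= /qad !expr0 !mulr1 mul1r scale1r subrr.
rewrite big_cons exprS mulnS; apply: qad_iter_mul_eq0; first by rewrite gl0 ?mem_head.
by apply: IHl => j' lj'; rewrite gl0 // in_cons lj' orbT.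
Qed.

Section SerreSum.

Variables (b : nat -> nat -> K) (w : K).
Hypotheses (w_neq0 : w != 0) (b_0 : forall M, b M 0 = 1)
  (b_succ : forall M, b M M.+1 = 0)
  (b_pascal : forall M k, (k <= M)%N ->
     b M.+1 k.+1 = w ^+ (M - k) * b M k + w ^- k.+1 * b M k.+1).

(* The weight [t] only serves the induction on [M]; Serre relations are [t = 1]. *)
Definition serre_coef M (t : K) k : K := (-1) ^+ k * b M k * t ^+ (M - k).

Definition serre_sum M t z : A :=
  \sum_(k < M.+1) serre_coef M t k *: (F ^+ k * z * F ^+ (M - k)).

Lemma serre_coef0 M t : serre_coef M.+1 t 0 = t / w ^+ M * serre_coef M (t * w) 0.
Proof.
have wM_neq0 : w ^+ M != 0 by rewrite expf_neq0.
by rewrite /serre_coef !b_0 !subn0 exprMn exprS; field.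
Qed.

Lemma serre_coefS M t k : (k <= M)%N ->
  serre_coef M.+1 t k.+1 = t / w ^+ M * serre_coef M (t * w) k.+1 - serre_coef M (t * w) k.
Proof.
move=> le_kM; rewrite /serre_coef subSS b_pascal //.
have [j ->] : exists j, M = (k + j)%N by exists (M - k)%N; lia.
case: j => [|j].
  rewrite addn0 b_succ subnn !(mulr0, mul0r, addr0, expr0, mulr1, mul1r).
  by rewrite exprS mulN1r mulNr sub0r.
have -> : (k + j.+1 - k = j.+1)%N by lia.
have -> : (k + j.+1 - k.+1 = j)%N by lia.
by rewrite !exprS exprMn exprD !exprS; field; rewrite ?expf_neq0 ?w_neq0.
Qed.

Lemma qad_serre_sum M t z :
  qad (t / w ^+ M) (serre_sum M (t * w) z) = - serre_sum M.+1 t z.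
Proof.
set X := fun k => F ^+ k * z * F ^+ (M.+1 - k).
have FS : F * serre_sum M (t * w) z = \sum_(k < M.+1) serre_coef M (t * w) k *: X k.+1.
  rewrite /serre_sum mulr_sumr; apply: eq_bigr => k _.
  by rewrite -scalerAr /X subSS !mulrA -exprS.
have SF : serre_sum M (t * w) z * F =
    serre_coef M (t * w) 0 *: X 0%N + \sum_(k < M.+1) serre_coef M (t * w) k.+1 *: X k.+1.
  rewrite -(big_ord_recl M.+1 (fun k => serre_coef M (t * w) k *: X k)) big_ord_recr /=.
  rewrite {2}/serre_coef b_succ mulr0 mul0r scale0r addr0.
  rewrite /serre_sum mulr_suml; apply: eq_bigr => k _.
  by rewrite -scalerAl /X -!mulrA -exprSr subSn // -ltnS.
rewrite /qad FS SF /serre_sum [in RHS]big_ord_recl serre_coef0.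
under [in RHS]eq_bigr => k _ do rewrite lift0.
under [in RHS]eq_bigr => k _.
  rewrite serre_coefS; last by rewrite -ltnS ltn_ord.
  rewrite scalerBl -scalerA.
  over.
by rewrite sumrB -scaler_sumr scalerDr scalerA /X !opprD opprK addrC -addrA.
Qed.

Lemma qad_iter_serre_sum M t z :
  qad_iter (t * w ^+ M) (w ^- 2) M z = (-1) ^+ M *: serre_sum M (t * w) z.
Proof.
elim: M t => [|M IHM] t.
  by rewrite /serre_sum big_ord1 /serre_coef b_0 !expr0 !mulr1 mul1r !scale1r.
rewrite /=.
have -> : t * w ^+ M.+1 * (w ^- 2) ^+ M = t * w / w ^+ M.
  by rewrite exprVn -exprM [w ^+ M.+1]exprS mulnC exprM; field; rewrite ?expf_neq0.
by rewrite [w ^+ M.+1]exprS mulrA IHM qadZ qad_serre_sum exprS mulN1r scaleNr scalerN.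
Qed.

Lemma serre_sum_eq0 M z :
  \sum_(0 <= k < M.+2) ((-1) ^+ k * b M.+1 k) *: (F ^+ k * z * F ^+ (M.+1 - k)) = 0 <->
  qad_iter (w ^+ M) (w ^- 2) M.+1 z = 0.
Proof.
have serre_sum1 : serre_sum M.+1 1 z =
    \sum_(0 <= k < M.+2) ((-1) ^+ k * b M.+1 k) *: (F ^+ k * z * F ^+ (M.+1 - k)).
  by rewrite /serre_sum big_mkord; apply: eq_bigr => k _; rewrite /serre_coef expr1n mulr1.
rewrite -serre_sum1 -[w ^+ M](mulKf w_neq0) -exprS qad_iter_serre_sum mulVf //.
by split=> [->|/eqP]; rewrite ?scaler0 // scaler_eq0 signr_eq0 => /eqP.
Qed.

End SerreSum.

End TwistedAdjoint.

Section CartanDatum.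

Variables (I : finType) (B : I -> I -> int).
Hypothesis cartanB : cartan_datum B.

Lemma cartan_aM i j : i != j -> cartan_a B i j * B i i = 2 * B i j.
Proof. by case: cartanB => _ _ Boff ij; rewrite /cartan_a divzK //; case: (Boff i j ij). Qed.

Lemma cartan_a_le0 i j : i != j -> cartan_a B i j <= 0.
Proof.
move=> ij; case: cartanB => _ Bdiag Boff.
rewrite -(pmulr_lle0 _ (Bdiag i).1) cartan_aM //.
by have := (Boff i j ij).2; lia.
Qed.

Lemma dsym_gt0 i : (0 < dsym B i)%N.
Proof.
case: cartanB => _ Bdiag _; have [Bii_gt0 two_dvd] := Bdiag i.
by have := divzK two_dvd; rewrite /dsym; lia.
Qed.

Lemma orbit_d_set1 i : orbit_d B i [set i] = dsym B i.
Proof. by rewrite /orbit_d /orbit_form_diag cards1 mulr1. Qed.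

Lemma orbit_cartan_a_set1 i (J : {set I}) a :
  (forall j, j \in J -> i != j /\ cartan_a B i j = a) ->
  orbit_cartan_a B i [set i] J = #|J|%:Z * a.
Proof.
move=> aJ; rewrite /orbit_cartan_a /orbit_form /orbit_form_diag big_set1 cards1 mulr1.
have -> : 2 * \sum_(j in J) B i j = #|J|%:Z * a * B i i.
  rewrite mulr_sumr (eq_bigr (fun=> a * B i i)) => [|j /aJ [ij <-]]; last by rewrite cartan_aM.
  by rewrite sumr_const -mulr_natl natz mulrA.
by case: cartanB => _ Bdiag _; rewrite mulzK // lt0r_neq0 // (Bdiag i).1.
Qed.

End CartanDatum.

Theorem proposition5p13 (I : finType) (B : I -> I -> int) (s : {perm I})
    (i j0 : I) :
  cartan_datum B -> admissible B s ->
  porbit s i = [set i] ->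
  porbit s j0 != porbit s i ->
  (forall j, j \in porbit s j0 -> cartan_a B i j != 0) ->
  (forall j, j \in porbit s j0 -> cartan_a B i j = cartan_a B i j0) ->
  forall (A : algType Qq) (f : I -> A), serre_rels B f ->
  let eta := porbit s i in
  let eta' := porbit s j0 in
  let N := `|1 - orbit_cartan_a B i eta eta'|%N in
  \sum_(0 <= k < N.+1)
     ((-1) ^+ k * qbinom (orbit_d B i eta) N k) *:
       (f i ^+ k * (\prod_(j in eta') f j) * f i ^+ (N - k)) = 0.
Proof.
move=> cartanB _ eta_i eta'_neq _ a_eq A f serre eta eta' N.
have i_neq j : j \in eta' -> i != j.
  by move=> jJ; apply: contraNneq eta'_neq => ->; rewrite eq_sym eq_porbit_mem.
set a := cartan_a B i j0; set d := dsym B i.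
have a_le0 : a <= 0 := cartan_a_le0 cartanB (i_neq j0 (porbit_id s j0)).
have [m r_eq] : exists m, `|1 - a|%N = m.+1 by exists `|- a|%N; lia.
have -> : N = (m * #|eta'|).+1.
  rewrite /N /eta eta_i (@orbit_cartan_a_set1 _ _ cartanB _ _ a); first by nia.
  by move=> j jJ; split; [exact: i_neq | exact: a_eq].
rewrite /eta eta_i orbit_d_set1 -/d.
have w_neq0 : qq ^+ d != 0 by rewrite expf_neq0 ?qq_neq0.
have serre_qad := serre_sum_eq0 _ w_neq0 (qbinom0 d) (qbinom_succ d)
  (qbinom_pascal (dsym_gt0 cartanB i)).
have card_eta' : #|eta'| = size [seq j <- index_enum I | j \in eta'].
  by rewrite -sum1_card -big_filter sum1_size.
apply/serre_qad; rewrite -big_filter card_eta' exprM.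
apply: qad_iter_prod_eq0 => j; rewrite mem_filter => /andP[jJ _].
apply/serre_qad; have := serre i j (i_neq j jJ).
by rewrite /= a_eq // -/a r_eq.
Qed.
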